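(* Let $G$ be a graph with $\mathrm{diam}(G)=k\ge 2$. If $F$ is a set of edges of $G$ such that $d(e,f)=k$ for all distinct $e,f\in F$, then $\mathrm{gp}(G)\ge 2|F|$.
   Context: All graphs are finite, simple and connected; $\mathrm{diam}(G)$ is the maximum distance between two vertices. For edges $e=uv$ and $f=xy$, $d(e,f)=\min\{d(u,x),d(u,y),d(v,x),d(v,y)\}$. A set of vertices is a general position set if no three of its vertices lie on a common geodesic (shortest path); $\mathrm{gp}(G)$ is the maximum cardinality of a general position set of $G$. *)

(* A finite simple graph is a symmetric irreflexive relation
   e : rel T on a finType T. *)
From mathcomp Require Import all_boot all_order.
Set Implicit Arguments. Unset Strict Implicit. Unset Printing Implicit Defensive.

Section Graph.
Variables (T : finType) (e : rel T).

Definition walk_len (x y : T) (n : nat) : bool :=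
  [exists p : n.-tuple T, path e x p && (last x p == y)].

(* shortest-path distance (in a connected graph every shortest walk has
   length < #|T|; the default #|T| is never reached then) *)
Definition dist (x y : T) : nat :=
  \big[minn/#|T|]_(n < #|T| | walk_len x y n) n.

Definition diam : nat := \max_(x : T) \max_(y : T) dist x y.

Definition connected_graph : Prop := forall x y : T, connect e x y.

Definition on_common_geodesic (u v w : T) : bool :=
  [exists x : T, exists y : T, exists p : (dist x y).-tuple T,
     [&& path e x p, last x p == y & all (mem (x :: tval p)) [:: u; v; w]]].

Definition gp_set (S : {set T}) : bool :=
  [forall u in S, forall v in S, forall w in S,
     [&& u != v, v != w & u != w] ==> ~~ on_common_geodesic u v w].

Definition gp : nat := \max_(S : {set T} | gp_set S) #|S|.

Definition is_edge (A : {set T}) : bool :=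
  [exists u : T, exists v : T, e u v && (A == [set u; v])].

Definition edist (A B : {set T}) : nat :=
  \big[minn/#|T|]_(x in A) \big[minn/#|T|]_(y in B) dist x y.

End Graph.

(* The endpoints of the edges of F form a general position set of size 2|F|.
   The edges are pairwise disjoint because they are at distance k > 0.  If
   three of their endpoints lay on a geodesic, the geodesic has length at most
   diam G = k, so their positions on it lie in [0, k]; two endpoints of
   distinct edges of F are at distance k, hence their positions differ by at
   least k.  Among three such vertices some one lies on an edge different from
   the edges of the two others, and in [0, k] no point is k apart from two
   distinct points. *)

From mathcomp Require Import all_boot all_order.
From mathcomp Require Import zify.
Import Order.TTheory.

Set Implicit Arguments.
Unset Strict Implicit.
Unset Printing Implicit Defensive.

Section Distance.
Variables (T : finType) (e : rel T).

Lemma dist_le_walk x y n : walk_len e x y n -> dist e x y <= n.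
Proof.
rewrite /dist => xy_n; case: (ltnP n #|T|) => [n_lt|n_ge].
  exact: (@bigmin_le_cond _ nat _ _ (Ordinal n_lt)).
apply: leq_trans n_ge; exact: (@bigmin_le_id _ nat).
Qed.

Lemma distxx x : dist e x x = 0.
Proof.
apply/eqP; rewrite -leqn0; apply: dist_le_walk.
by apply/existsP; exists [tuple]; rewrite /= eqxx.
Qed.

Lemma dist_le_diam x y : dist e x y <= diam e.
Proof. exact: leq_trans (leq_bigmax y) (leq_bigmax x). Qed.

Lemma edist_le_dist [A B : {set T}] [a b : T] :
  a \in A -> b \in B -> edist e A B <= dist e a b.
Proof.
move=> aA bB; apply: (@bigmin_inf _ nat _ _ _ _ _ _ aA).
exact: (@bigmin_inf _ nat _ _ _ _ _ _ bB).
Qed.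

Lemma edist_gt0_disjoint (A B : {set T}) :
  0 < edist e A B -> [disjoint A & B].
Proof.
move=> AB_gt0; apply/pred0P => z /=; apply/negP => /andP[zA zB].
move: (edist_le_dist zA zB); rewrite distxx leqn0 => /eqP AB0.
by rewrite AB0 in AB_gt0.
Qed.

Lemma card_edge (A : {set T}) : irreflexive e -> is_edge e A -> #|A| = 2.
Proof.
move=> e_irr /existsP[a /existsP[b /andP[ab /eqP->]]].
by rewrite cards2; case: eqVneq ab => [->|//]; rewrite e_irr.
Qed.

Lemma edge_three_vertices (A : {set T}) u v w :
  is_edge e A -> u \in A -> v \in A -> w \in A -> [|| u == v, v == w | u == w].
Proof.
case/existsP=> a /existsP[b /andP[_ /eqP->]].
by rewrite !inE => /orP[]/eqP-> /orP[]/eqP-> /orP[]/eqP->; rewrite eqxx ?orbT.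
Qed.

Lemma walk_len_prefix y q n :
  path e y q -> n <= size q -> walk_len e y (nth y (y :: q) n) n.
Proof.
move=> yq n_le; apply/existsP.
have size_q : size (take n q) == n by rewrite size_takel.
exists (Tuple size_q); rewrite /= take_path //= (last_nth y) size_takel //.
by case: n n_le {size_q} => //= n n_lt; rewrite nth_take.
Qed.

Lemma walk_len_nth x0 s i j :
  sorted e s -> i <= j < size s -> walk_len e (nth x0 s i) (nth x0 s j) (j - i).
Proof.
move=> es /andP[le_ij lt_js]; have lt_is := leq_ltn_trans le_ij lt_js.
have := drop_sorted i es; rewrite (drop_nth x0 lt_is) => /walk_len_prefix.
move=> /(_ (j - i)); rewrite -(drop_nth x0 lt_is) nth_drop subnKC //.
rewrite (set_nth_default x0) // size_drop; apply; lia.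
Qed.

Lemma dist_le_index s a b : sorted e s -> a \in s -> b \in s ->
  index a s <= index b s -> dist e a b <= index b s - index a s.
Proof.
move=> es a_s b_s le_ab; apply: dist_le_walk.
have := walk_len_nth a (i := index a s) (j := index b s) es.
by rewrite !nth_index // le_ab index_mem => ->.
Qed.

End Distance.

Definition far (k i j : nat) : bool := (k + i <= j) || (k + j <= i).

Lemma farC k : symmetric (far k).
Proof. by move=> i j; rewrite /far orbC. Qed.

Lemma far_common_eq k i j l :
  i <= k -> j <= k -> l <= k -> far k l i -> far k l j -> i = j.
Proof. rewrite /far; lia. Qed.

Section EdgesAtDiameter.
Variables (T : finType) (e : rel T) (k : nat) (F : {set {set T}}).
Hypotheses (e_irr : irreflexive e) (diam_k : diam e = k) (k_gt0 : 0 < k).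
Hypothesis F_edge : forall A, A \in F -> is_edge e A.
Hypothesis F_far : forall A B, A \in F -> B \in F -> A != B -> edist e A B = k.

Lemma card_cover_edges : #|cover F| = 2 * #|F|.
Proof.
have /eqP <- : trivIset F.
  apply/trivIsetP => A B AF BF AB; apply: (@edist_gt0_disjoint _ e).
  by rewrite F_far.
have card2 A : A \in F -> #|A| = 2 by move=> /F_edge; apply: card_edge.
by rewrite (eq_bigr _ card2) sum_nat_const mulnC.
Qed.

Section OnPath.
Variable s : seq T.
Hypotheses (s_path : sorted e s) (size_s : size s <= k.+1).

Lemma index_le_k a : a \in s -> index a s <= k.
Proof. by move=> a_s; rewrite -ltnS (leq_trans _ size_s) ?index_mem. Qed.

Lemma far_index a b A B : A \in F -> B \in F -> A != B ->
  a \in A -> b \in B -> a \in s -> b \in s -> far k (index a s) (index b s).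
Proof.
wlog le_ab : a b A B / index a s <= index b s.
  move=> wlog_ab AF BF AB aA bB a_s b_s.
  case: (leqP (index a s) (index b s)) => [le_ab|/ltnW le_ba].
    exact: (wlog_ab a b A B).
  by rewrite farC; apply: (wlog_ab b a B A); rewrite // eq_sym.
move=> AF BF AB aA bB a_s b_s; apply/orP; left.
have := leq_trans (edist_le_dist e aA bB) (dist_le_index s_path a_s b_s le_ab).
by rewrite F_far // leq_subRL // addnC.
Qed.

Lemma lone_edge a b c A B C : A \in F -> B \in F -> C \in F ->
  a \in A -> b \in B -> c \in C -> a \in s -> b \in s -> c \in s ->
  a != b -> C != A -> C != B -> False.
Proof.
move=> AF BF CF aA bB cC a_s b_s c_s /eqP ab CA CB.
apply: ab; apply: (index_inj a a_s b_s).
apply: (far_common_eq (k := k) (l := index c s)); rewrite ?index_le_k //.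
  exact: (far_index CF AF).
exact: (far_index CF BF).
Qed.

Lemma cover_three_on_path u v w :
  u \in cover F -> v \in cover F -> w \in cover F ->
  u \in s -> v \in s -> w \in s -> u != v -> v != w -> u != w -> False.
Proof.
case/bigcupP=> [Au AuF uA] /bigcupP[Av AvF vA] /bigcupP[Aw AwF wA].
move=> us vs ws uv vw uw.
case: (eqVneq Au Av) => [eq_uv|ne_uv]; case: (eqVneq Av Aw) => [eq_vw|ne_vw].
- subst Av Aw; move: (edge_three_vertices (F_edge AuF) uA vA wA).
  by rewrite (negbTE uv) (negbTE vw) (negbTE uw).
- by apply: (lone_edge AuF AvF AwF uA vA wA us vs ws uv); rewrite ?eq_uv eq_sym.
- by apply: (lone_edge AvF AwF AuF vA wA uA vs ws us vw); rewrite -?eq_vw.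
- by apply: (lone_edge AuF AwF AvF uA wA vA us ws vs uw); rewrite // eq_sym.
Qed.

End OnPath.

Lemma gp_set_cover_edges : gp_set e (cover F).
Proof.
apply/forall_inP => u uF; apply/forall_inP => v vF; apply/forall_inP => w wF.
apply/implyP => /and3P[uv vw uw]; apply/negP.
case/existsP=> x /existsP[y /existsP[p /and3P[xp _ /and4P[us vs ws _]]]].
have size_xp : size (x :: p) <= k.+1.
  by rewrite /= size_tuple ltnS -diam_k dist_le_diam.
exact: (@cover_three_on_path (x :: p) xp size_xp _ _ _ uF vF wF us vs ws).
Qed.

End EdgesAtDiameter.

Theorem proposition4p4 (T : finType) (e : rel T) (k : nat) (F : {set {set T}}) :
  symmetric e -> irreflexive e -> connected_graph e ->
  diam e = k -> 2 <= k ->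
  (forall A, A \in F -> is_edge e A) ->
  (forall A B, A \in F -> B \in F -> A != B -> edist e A B = k) ->
  2 * #|F| <= gp e.
Proof.
move=> _ e_irr _ diam_k k_ge2 F_edge F_far; have k_gt0 : 0 < k by apply: ltnW.
rewrite -(card_cover_edges e_irr k_gt0 F_edge F_far).
exact: leq_bigmax_cond (gp_set_cover_edges diam_k F_edge F_far).
Qed.
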